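(* For all constraint sets $C,\tilde C$ and substitutions $\sigma,\sigma_{\tilde c}$: if $C\to^{\sigma}\tilde C$ and $\sigma_{\tilde c}\vdash_{\min}\tilde C$, then $\sigma\oplus\sigma_{\tilde c}\vdash_{\min} C$.
   Context: There are two binding times $\mathsf{S}$, $\mathsf{D}$; $\mathcal{L}$ is a finite set of labels disjoint from them. A binding-time expression is a binding time or a label; a constraint is a formal pair $B_1\preceq B_2$; a constraint set is a finite set of constraints, with $\mathrm{labels}(C)=\{l\in\mathcal{L}:\exists B.\ l\preceq B\in C\text{ or }B\preceq l\in C\}$. Satisfaction $\vdash b_1\preceq b_2$ holds exactly for $\mathsf{S}\preceq\mathsf{D}$, $\mathsf{S}\preceq\mathsf{S}$, $\mathsf{D}\preceq\mathsf{D}$. A substitution is a finite partial map $\sigma:\mathcal{L}\rightharpoonup\{\mathsf{S},\mathsf{D}\}$, extended to binding-time expressions as the identity on binding times and on labels outside its domain; $\sigma(C)=\{\sigma(B_1)\preceq\sigma(B_2): B_1\preceq B_2\in C\}$. The extension $\sigma\oplus\hat\sigma$ has domain $\mathrm{dom}(\sigma)\cup\mathrm{dom}(\hat\sigma)$ and maps $l$ to $\sigma(l)$ if $l\in\mathrm{dom}(\sigma)$, else to $\hat\sigma(l)$. $\sigma\vdash C$ means: for every $B_1\preceq B_2\in C$, $\sigma(B_1),\sigma(B_2)$ are binding times and $\vdash\sigma(B_1)\preceq\sigma(B_2)$. $\sigma_c\vdash_{\min}C$ means: $\sigma_c\vdash C$, $\mathrm{dom}(\sigma_c)=\mathrm{labels}(C)$,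 and for every $\sigma\vdash C$ and $l\in\mathrm{labels}(C)$, $\vdash\sigma_c(l)\preceq\sigma(l)$. Write $[\,]$ for the empty substitution and $[l\mapsto b]$ for the substitution with domain $\{l\}$. The normalization relation $C\to^{\sigma}\tilde C$ holds if $C=C_0\uplus\{c\}$ and one of: (a) $c=\mathsf{S}\preceq\mathsf{S}$, $\sigma=[\,]$, $\tilde C=C_0$; (b) $c=\mathsf{S}\preceq\mathsf{D}$, $\sigma=[\,]$, $\tilde C=C_0$; (c) $c=\mathsf{D}\preceq\mathsf{D}$, $\sigma=[\,]$, $\tilde C=C_0$; (d) $c=l\preceq\mathsf{S}$ with $l\in\mathcal{L}$, $\sigma=[l\mapsto\mathsf{S}]$, $\tilde C=[l\mapsto\mathsf{S}](C_0)$; (e) $c=\mathsf{D}\preceq l$ with $l\in\mathcal{L}$, $\sigma=[l\mapsto\mathsf{D}]$, $\tilde C=[l\mapsto\mathsf{D}](C_0)$. *)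

From mathcomp Require Import all_boot.
From Stdlib Require Import List.
Set Implicit Arguments. Unset Strict Implicit. Unset Printing Implicit Defensive.

Inductive bt := BS | BD.

Inductive bexpr (L : Type) := BT (b : bt) | Lab (l : L).
Arguments BT {L} b.
Arguments Lab {L} l.

(* A constraint B1 <= B2 is a pair; a constraint set is a finite set,
   represented by a list read up to set equality. *)
Definition constr (L : Type) := (bexpr L * bexpr L)%type.
Definition cset (L : Type) := list (constr L).

Definition set_eq (L : Type) (C1 C2 : cset L) : Prop :=
  forall x, In x C1 <-> In x C2.

Definition labels_in (L : Type) (C : cset L) (l : L) : Prop :=
  exists B, In (Lab l, B) C \/ In (B, Lab l) C.

Definition bt_le (b1 b2 : bt) : Prop :=
  match b1, b2 with
  | BS, BD | BS, BS | BD, BD => True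
  | BD, BS => False
  end.

Definition subst (L : Type) := L -> option bt.

Definition empty_subst (L : Type) : subst L := fun _ => None.
Definition single_subst (L : eqType) (l : L) (b : bt) : subst L :=
  fun l' => if l' == l then Some b else None.

Definition apply_subst (L : Type) (s : subst L) (B : bexpr L) : bexpr L :=
  match B with
  | BT b => BT b
  | Lab l => match s l with Some b => BT b | None => Lab l end
  end.

Definition subst_cset (L : Type) (s : subst L) (C : cset L) : cset L :=
  map (fun c => (apply_subst s c.1, apply_subst s c.2)) C.

Definition oplus (L : Type) (s s' : subst L) : subst L :=
  fun l => match s l with Some b => Some b | None => s' l end.

Definition bexpr_le (L : Type) (B1 B2 : bexpr L) : Prop :=
  match B1, B2 with
  | BT b1, BT b2 => bt_le b1 b2
  | _, _ => False
  end.

Definition sat (L : Type) (s : subst L) (C : cset L) : Prop :=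
  forall B1 B2, In (B1, B2) C -> bexpr_le (apply_subst s B1) (apply_subst s B2).

Definition sat_min (L : Type) (sc : subst L) (C : cset L) : Prop :=
  sat sc C /\
  (forall l, sc l <> None <-> labels_in C l) /\
  (forall s, sat s C -> forall l, labels_in C l ->
     bexpr_le (apply_subst sc (Lab l)) (apply_subst s (Lab l))).

(* Normalization step C ->^sigma Ct, with C = C0 (disjoint union) {c}. *)
Definition norm_step (L : eqType) (C : cset L) (s : subst L) (Ct : cset L) : Prop :=
  exists (C0 : cset L) (c : constr L),
    set_eq C (c :: C0) /\ ~ In c C0 /\
    ( (c = (BT BS, BT BS) /\ s = @empty_subst L /\ set_eq Ct C0)
   \/ (c = (BT BS, BT BD) /\ s = @empty_subst L /\ set_eq Ct C0)
   \/ (c = (BT BD, BT BD) /\ s = @empty_subst L /\ set_eq Ct C0)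
   \/ (exists l, c = (Lab l, BT BS) /\ s = single_subst l BS /\
                 set_eq Ct (subst_cset (single_subst l BS) C0))
   \/ (exists l, c = (BT BD, Lab l) /\ s = single_subst l BD /\
                 set_eq Ct (subst_cset (single_subst l BD) C0)) ).

(* Each normalization step removes a constraint c whose solutions all agree
   with sigma on labels(c), and sigma has domain exactly labels(c).  Hence any
   solution of C extends sigma, so applying sigma to the rest of C loses no
   solutions; the minimal solution of the remaining constraints, combined with
   sigma, is therefore the minimal solution of C. *)
From mathcomp Require Import all_boot.
From Stdlib Require Import List.

Set Implicit Arguments.
Unset Strict Implicit.
Unset Printing Implicit Defensive.

Section Substitutions.

Variable L : Type.
Implicit Types (s t : subst L) (l : L) (B : bexpr L) (c : constr L) (C : cset L).

Definition extends s t : Prop := forall l b, s l = Some b -> t l = Some b.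

(* Uniqueness is on labels(c) only: every solution of [c] extends [s]. *)
Definition unique_solution s c : Prop :=
  [/\ sat s [:: c], forall t, sat t [:: c] -> extends s t
    & forall l, s l <> None <-> labels_in [:: c] l].

Lemma bt_le_refl (b : bt) : bt_le b b.
Proof. by case: b. Qed.

Lemma extends_oplus s t : extends s (oplus s t).
Proof. by move=> l b; rewrite /oplus => ->. Qed.

Lemma apply_oplus s t B : apply_subst (oplus s t) B = apply_subst t (apply_subst s B).
Proof. by case: B => [b|l] //=; rewrite /oplus; case: (s l). Qed.

Lemma apply_oplus_extends s t B :
  extends s t -> apply_subst (oplus s t) B = apply_subst t B.
Proof. by move=> st; case: B => [b|l] //=; rewrite /oplus; case E: (s l) => //; rewrite (st _ _ E). Qed.

Lemma apply_extends_BT s t B b :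
  extends s t -> apply_subst s B = BT b -> apply_subst t B = BT b.
Proof. by move=> st; case: B => [b'|l] //=; case E: (s l) => [b'|] // [<-]; rewrite (st _ _ E). Qed.

Lemma sat_extends s t C : extends s t -> sat s C -> sat t C.
Proof.
move=> st sC B1 B2 /sC; case E1: (apply_subst s B1) => [b1|] //.
case E2: (apply_subst s B2) => [b2|] // le12.
by rewrite (apply_extends_BT st E1) (apply_extends_BT st E2).
Qed.

Lemma sat_set_eq t C C' : set_eq C C' -> sat t C <-> sat t C'.
Proof. by move=> CC'; split=> tC B1 B2 H; apply: tC; apply/CC'. Qed.

Lemma sat_cons t c C : sat t (c :: C) <-> sat t [:: c] /\ sat t C.
Proof.
split=> [tC | [tc tC] B1 B2 [E | H]].
- split=> [B1 B2 [E | []] | B1 B2 H]; apply: tC; [left | right] => //.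
- by apply: tc; left.
- exact: tC.
Qed.

Lemma sat_subst_cset s t C : sat t (subst_cset s C) <-> sat (oplus s t) C.
Proof.
split=> tC B1 B2.
  by move=> H; rewrite !apply_oplus; apply: tC; apply/in_map_iff; exists (B1, B2).
by case/in_map_iff => [[A1 A2] [[<- <-] H]]; rewrite -!apply_oplus; apply: tC.
Qed.

Lemma labels_in_set_eq C C' l : set_eq C C' -> labels_in C l <-> labels_in C' l.
Proof. by move=> CC'; split=> -[B [H | H]]; exists B; [left | right | left | right]; apply/CC'. Qed.

Lemma labels_in_cons c C l :
  labels_in (c :: C) l <-> labels_in [:: c] l \/ labels_in C l.
Proof.
split.
- case=> B [[E | H] | [E | H]].
  + by left; exists B; left; left.
  + by right; exists B; left.
  + by left; exists B; right; left.
  + by right; exists B; right.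
- case=> [[B [[E | []] | [E | []]]] | [B [H | H]]]; exists B.
  + by left; left.
  + by right; left.
  + by left; right.
  + by right; right.
Qed.

Lemma labels_in_subst_cset s C l :
  labels_in (subst_cset s C) l <-> labels_in C l /\ s l = None.
Proof.
split.
  case=> B [] /in_map_iff [[B1 B2] [[E1 E2] H]].
    move: E1; case: B1 H => [b|l'] H //=; case E: (s l') => [b|] //= [<-].
    by split=> //; exists B2; left.
  move: E2; case: B2 H => [b|l'] H //=; case E: (s l') => [b|] //= [<-].
  by split=> //; exists B1; right.
case=> [[B [H | H]] E]; exists (apply_subst s B).
  by left; apply/in_map_iff; exists (Lab l, B); rewrite /= E.
by right; apply/in_map_iff; exists (B, Lab l); rewrite /= E.
Qed.

Lemma sat1 t c : sat t [:: c] <-> bexpr_le (apply_subst t c.1) (apply_subst t c.2).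
Proof. by case: c => B1 B2; split=> [tc | H _ _ [[<- <-] | []]] //; apply: tc; left. Qed.

Lemma subst_cset_empty C : subst_cset (@empty_subst L) C = C.
Proof. by elim: C => [|[[b1|l1] [b2|l2]] C /= ->]. Qed.

Lemma unique_solution_empty b1 b2 :
  bt_le b1 b2 -> unique_solution (@empty_subst L) (BT b1, BT b2).
Proof.
move=> le12; split=> [|t _ l b //|l].
  exact/sat1.
by split=> // -[B [[E | []] | [E | []]]].
Qed.

Lemma labels_in_lab_bt l b l' : labels_in [:: (Lab l, BT b)] l' <-> l' = l.
Proof.
split=> [[B [[[->] | []] | [[] | []]]] // | ->].
by exists (BT b); left; left.
Qed.

Lemma labels_in_bt_lab b l l' : labels_in [:: (BT b, Lab l)] l' <-> l' = l.
Proof.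
split=> [[B [[[] | []] | [[_ ->] | []]]] // | ->].
by exists (BT b); right; left.
Qed.

Lemma sat_lab_S t l : sat t [:: (Lab l, BT BS)] <-> t l = Some BS.
Proof. by rewrite sat1 /=; case: (t l) => [[]|]. Qed.

Lemma sat_D_lab t l : sat t [:: (BT BD, Lab l)] <-> t l = Some BD.
Proof. by rewrite sat1 /=; case: (t l) => [[]|]. Qed.

End Substitutions.

Lemma unique_solution_single (L : eqType) (l : L) b c :
  (forall t, sat t [:: c] <-> t l = Some b) ->
  (forall l', labels_in [:: c] l' <-> l' = l) ->
  unique_solution (single_subst l b) c.
Proof.
move=> sat_c labels_c; split=> [|t /sat_c tl l' b'|l'].
- by apply/sat_c; rewrite /single_subst eqxx.
- by rewrite /single_subst; case: eqP => // -> [<-].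
- by rewrite labels_c /single_subst; case: eqP.
Qed.

Section NormalizationStep.

Variables (L : Type) (C C0 Ct : cset L) (c : constr L) (s sct : subst L).
Hypotheses (C_split : set_eq C (c :: C0)) (Ct_def : set_eq Ct (subst_cset s C0)).
Hypothesis s_solves_c : unique_solution s c.
Hypothesis sct_min : sat_min sct Ct.

Lemma sat_step t : sat t C -> extends s t /\ sat t Ct.
Proof.
case: s_solves_c => _ s_forced _.
move=> /(sat_set_eq t C_split) /sat_cons [tc tC0]; have st := s_forced t tc.
split=> //; apply/(sat_set_eq t Ct_def)/sat_subst_cset.
by move=> B1 B2 H; rewrite !apply_oplus_extends //; apply: tC0.
Qed.

Lemma labels_in_step l : labels_in C l <-> s l <> None \/ labels_in Ct l.
Proof.
case: s_solves_c => _ _ dom_s.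
rewrite (labels_in_set_eq l C_split) labels_in_cons -dom_s.
rewrite (labels_in_set_eq l Ct_def) labels_in_subst_cset.
by case: (s l) => [b|]; intuition discriminate.
Qed.

Lemma sat_oplus_step : sat (oplus s sct) C.
Proof.
case: s_solves_c => sc _ _; case: sct_min => sctCt _.
apply/(sat_set_eq _ C_split)/sat_cons; split.
  by apply: sat_extends sc; apply: extends_oplus.
by apply/sat_subst_cset/(sat_set_eq _ Ct_def).
Qed.

Lemma dom_oplus_step l : oplus s sct l <> None <-> labels_in C l.
Proof.
case: sct_min => _ [dom_sct _]; rewrite labels_in_step -dom_sct /oplus.
by case: (s l) => [b|]; intuition discriminate.
Qed.

Lemma oplus_step_minimal t l :
  sat t C -> labels_in C l ->
  bexpr_le (apply_subst (oplus s sct) (Lab l)) (apply_subst t (Lab l)).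
Proof.
case: sct_min => _ [_ sct_least] /sat_step [st tCt] /labels_in_step.
rewrite /= /oplus; case E: (s l) => [b|] [sl | Ctl] //=; last exact: sct_least.
all: by rewrite (st _ _ E); apply: bt_le_refl.
Qed.

Lemma sat_min_oplus_step : sat_min (oplus s sct) C.
Proof.
split; first exact: sat_oplus_step.
by split; [exact: dom_oplus_step | move=> t tC l; exact: oplus_step_minimal].
Qed.

End NormalizationStep.

Lemma norm_step_unique_solution (L : eqType) (C Ct : cset L) (s : subst L) :
  norm_step C s Ct ->
  exists c C0, [/\ set_eq C (c :: C0), set_eq Ct (subst_cset s C0)
                 & unique_solution s c].
Proof.
case=> C0 [c [C_split [_ rule]]]; exists c, C0.
suff [] : set_eq Ct (subst_cset s C0) /\ unique_solution s c by split.
case: rule => [|[|[|[|]]]] => [[-> [-> Ct_C0]] | [-> [-> Ct_C0]] | [-> [-> Ct_C0]]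
  | [l [-> [-> Ct_def]]] | [l [-> [-> Ct_def]]]].
1-3: by split; [rewrite subst_cset_empty | exact: unique_solution_empty].
- split=> //; apply: unique_solution_single => [t | l']; [exact: sat_lab_S | exact: labels_in_lab_bt].
- split=> //; apply: unique_solution_single => [t | l']; [exact: sat_D_lab | exact: labels_in_bt_lab].
Qed.

Theorem lemma10 (L : finType) (C Ct : cset L) (s sct : subst L) :
  norm_step C s Ct -> sat_min sct Ct -> sat_min (oplus s sct) C.
Proof.
move=> /norm_step_unique_solution [c [C0 [C_split Ct_def s_solves_c]]] sct_min.
exact: sat_min_oplus_step C_split Ct_def s_solves_c sct_min.
Qed.
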